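(* Let $(\mathfrak g,\mathfrak g^* )$ be a Hom-Lie bialgebra, with Hom-Lie algebras $(\mathfrak{g},[\cdot,\cdot]_{\mathfrak{g}},\phi_{\mathfrak{g}})$ and $(\mathfrak g^*,[\cdot,\cdot]_{\mathfrak g^*},\phi_{\mathfrak g}^* )$. Then $(\mathfrak g\oplus\mathfrak g^*,[\cdot,\cdot]_d,\phi_{\mathfrak g}\oplus\phi_{\mathfrak g}^* )$, where $[x+a,y+b]_d=[x,y]_{\mathfrak g}+\mathrm{ad}^\circ_xb-\mathrm{ad}^\circ_ya+[a,b]_{\mathfrak g^*}+\mathfrak{ad}^\circ_ay-\mathfrak{ad}^\circ_bx$, is a weakly involutive Hom-Lie algebra.
   Context: $\mathfrak g$ is finite-dimensional. A Hom-Lie algebra $(\mathfrak{h},[\cdot,\cdot]_{\mathfrak{h}},\phi_{\mathfrak{h}})$: skew-symmetric bilinear bracket and linear map with $\phi_{\mathfrak h}[x,y]=[\phi_{\mathfrak h}x,\phi_{\mathfrak h}y]$ and $[\phi_{\mathfrak h}(x),[y,z]]+[\phi_{\mathfrak h}(y),[z,x]]+[\phi_{\mathfrak h}(z),[x,y]]=0$; weakly involutive if $[\phi_{\mathfrak h}^2(x),y]=[x,y]$. For $z\in\mathfrak g$, $t\in\mathfrak g\otimes\mathfrak g$: $\mathrm{ad}_zt=(\mathrm{ad}_z\otimes\phi_{\mathfrak g}+\phi_{\mathfrak g}\otimes\mathrm{ad}_z)t$, $\mathrm{ad}_zy=[z,y]_{\mathfrak g}$. A Hom-Lie bialgebra $(\mathfrak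 g,\mathfrak g^* )$ is a pair of weakly involutive Hom-Lie algebras $(\mathfrak{g},[\cdot,\cdot]_{\mathfrak{g}},\phi_{\mathfrak{g}})$ and $(\mathfrak g^*,[\cdot,\cdot]_{\mathfrak g^*},\phi_{\mathfrak g}^* )$ such that $\Delta:\mathfrak g\to\mathfrak g\otimes\mathfrak g$, $\langle\Delta(x),a\otimes b\rangle=\langle x,[a,b]_{\mathfrak g^*}\rangle$, satisfies $\Delta[x,y]_{\mathfrak g}=\mathrm{ad}_{\phi_{\mathfrak g}(x)}\Delta(y)-\mathrm{ad}_{\phi_{\mathfrak g}(y)}\Delta(x)$. $\mathrm{ad}^\circ_xa\in\mathfrak g^*$: $\langle\mathrm{ad}^\circ_xa,y\rangle=-\langle a,[\phi_{\mathfrak g}(x),y]_{\mathfrak g}\rangle$; $\mathfrak{ad}^\circ_ax\in\mathfrak g$: $\langle\mathfrak{ad}^\circ_ax,b\rangle=-\langle x,[\phi_{\mathfrak g}^*(a),b]_{\mathfrak g^*}\rangle$. *)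

(* g = K^n (finite-dimensional, coordinates 'rV[K]_n),
   g^* = K^n with the standard pairing <x,a> = \sum_i x_i a_i,
   g (x) g = 'M[K]_n with x (x) y := x^T *m y. *)
From HB Require Import structures.
From mathcomp Require Import all_boot all_order all_algebra.
Set Implicit Arguments. Unset Strict Implicit. Unset Printing Implicit Defensive.
Import GRing.Theory.
Local Open Scope ring_scope.

Definition HomLie (K : fieldType) (V : lmodType K)
    (br : V -> V -> V) (phi : V -> V) : Prop :=
  [/\ (forall (c : K) (x y z : V), br (c *: x + y) z = c *: br x z + br y z),
      (forall (c : K) (x y z : V), br z (c *: x + y) = c *: br z x + br z y),
      (forall x y : V, br x y = - br y x),
      (forall (c : K) (x y : V), phi (c *: x + y) = c *: phi x + phi y) &
      ((forall x y : V, phi (br x y) = br (phi x) (phi y)) /\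
      (forall x y z : V,
         br (phi x) (br y z) + br (phi y) (br z x) + br (phi z) (br x y) = 0))].

Definition weakly_involutive (K : fieldType) (V : lmodType K)
    (br : V -> V -> V) (phi : V -> V) : Prop :=
  forall x y : V, br (phi (phi x)) y = br x y.

Section Bialg.
Variables (K : fieldType) (n : nat).
Local Notation V := 'rV[K]_n.

Definition ev (i : 'I_n) : V := delta_mx 0 i.

Definition pairing (x a : V) : K := \sum_i x 0 i * a 0 i.

(* dual map phi^* : <phi^* a, x> = <a, phi x> *)
Definition dualmap (phi : V -> V) (a : V) : V :=
  \row_j pairing (phi (ev j)) a.

(* ad^o_x a : <ad^o_x a, y> = - <a, [phi x, y]_g> *)
Definition coadg (brg : V -> V -> V) (phi : V -> V) (x a : V) : V :=
  \row_j - pairing (brg (phi x) (ev j)) a.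

(* frak{ad}^o_a x : <frak{ad}^o_a x, b> = - <x, [phi^* a, b]_{g^*}> *)
Definition coads (brs : V -> V -> V) (phi : V -> V) (a x : V) : V :=
  \row_j - pairing x (brs (dualmap phi a) (ev j)).

Definition tens (x y : V) : 'M[K]_n := x^T *m y.

Definition tmap (f h : V -> V) (t : 'M[K]_n) : 'M[K]_n :=
  \sum_i \sum_j t i j *: tens (f (ev i)) (h (ev j)).

Definition adT (brg : V -> V -> V) (phi : V -> V) (z : V) (t : 'M[K]_n)
  : 'M[K]_n := tmap (brg z) phi t + tmap phi (brg z) t.

(* Delta : <Delta x, a (x) b> = <x, [a,b]_{g^*}>, i.e. on the basis
   Delta x = \sum_{i,j} <x,[e_i,e_j]_{g^*}> e_i (x) e_j *)
Definition Delta (brs : V -> V -> V) (x : V) : 'M[K]_n :=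
  \matrix_(i, j) pairing x (brs (ev i) (ev j)).

Definition HomLieBialgebra (brg : V -> V -> V) (phi : V -> V)
    (brs : V -> V -> V) : Prop :=
  [/\ HomLie brg phi, weakly_involutive brg phi,
      HomLie brs (dualmap phi), weakly_involutive brs (dualmap phi) &
      forall x y : V, Delta brs (brg x y)
        = adT brg phi (phi x) (Delta brs y) - adT brg phi (phi y) (Delta brs x)].

(* double bracket on g (+) g^*, elements (x, a) standing for x + a *)
Definition brd (brg : V -> V -> V) (phi : V -> V) (brs : V -> V -> V)
    (u v : V * V) : V * V :=
  let (x, a) := u in let (y, b) := v in
  (brg x y + coads brs phi a y - coads brs phi b x,
   coadg brg phi x b - coadg brg phi y a + brs a b).

Definition phid (phi : V -> V) (u : V * V) : V * V :=
  (phi u.1, dualmap phi u.2).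

End Bialg.

From HB Require Import structures.
From mathcomp Require Import all_boot all_order all_algebra.
From mathcomp Require Import sesquilinear ring.
Set Implicit Arguments. Unset Strict Implicit. Unset Printing Implicit Defensive.
Import GRing.Theory.
Local Open Scope ring_scope.

(* Every identity below is verified by pairing it with arbitrary vectors, which
   turns it into a scalar identity in K.  Hom-Jacobi and weak involutivity make
   the coadjoint actions ad° of g on g* and frak-ad° of g* on g representations,
   and pairing the cocycle condition with a (x) b gives two mixed identities, for
   frak-ad°_{phi* c}[x,y] and for ad°_{phi x}[a,b].  The Hom-Jacobiator of the
   double is trilinear and cyclically invariant, so it suffices to evaluate it on
   triples taken from g or g*: on a single factor it is that factor's Hom-Jacobi
   identity, and on two elements of one factor and one of the other its two
   components are a representation property and a mixed identity. *)

Section Pairing.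
Variables (K : fieldType) (n : nat).
Local Notation V := 'rV[K]_n.
Implicit Types (x y a b : V) (f : V -> V).

Lemma pairing_is_bilinear :
  bilinear_for (GRing.Scale.Law.clone _ _ *%R _) (GRing.Scale.Law.clone _ _ *%R _)
    (@pairing K n).
Proof.
by split=> [b|x] k y z /=; rewrite /pairing mulr_sumr -big_split;
  apply: eq_bigr => i _; rewrite !mxE /=; ring.
Qed.

HB.instance Definition _ :=
  bilinear_isBilinear.Build K V V K _ _ (@pairing K n) pairing_is_bilinear.

Lemma pairingC x a : pairing x a = pairing a x.
Proof. by apply: eq_bigr => i _; rewrite mulrC. Qed.

Lemma pairing_ev x j : pairing x (ev K j) = x 0 j.
Proof.
rewrite /pairing (bigD1 j) //= big1 => [|i /negPf ji]; rewrite mxE.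
  by rewrite !eqxx mulr1 addr0.
by rewrite ji mulr0.
Qed.

Lemma eq_by_pairingr x y : (forall b, pairing x b = pairing y b) -> x = y.
Proof. by move=> xy; apply/rowP => j; rewrite -!pairing_ev. Qed.

Lemma eq_by_pairingl a b : (forall x, pairing x a = pairing x b) -> a = b.
Proof. by move=> ab; apply: eq_by_pairingr => x; rewrite !(pairingC _ x). Qed.

Lemma dualmap_is_linear f : linear (dualmap f).
Proof. by move=> k a b; apply/rowP => j; rewrite !mxE linearPr. Qed.

HB.instance Definition _ f :=
  GRing.isLinear.Build K V V *:%R (dualmap f) (dualmap_is_linear f).

Lemma pairing_dualmap (f : {linear V -> V}) x a :
  pairing x (dualmap f a) = pairing (f x) a.
Proof.
rewrite [in RHS](row_sum_delta x) linear_sum linear_sumlz.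
by apply: eq_bigr => j _; rewrite linearZ linearZl_LR mxE.
Qed.

Lemma dualmapK (f : {linear V -> V}) a : dualmap (dualmap f) a = f a.
Proof.
apply: eq_by_pairingl => x.
by rewrite pairing_dualmap pairingC pairing_dualmap pairingC.
Qed.

Lemma coads_coadg (br : V -> V -> V) f a x : coads br f a x = coadg br (dualmap f) a x.
Proof. by apply/rowP => j; rewrite !mxE pairingC. Qed.

End Pairing.

Section TensorPairing.
Variables (K : fieldType) (n : nat).
Local Notation V := 'rV[K]_n.
Implicit Types (x y a b : V) (f h : V -> V) (t : 'M[K]_n).

Definition tpairing a b t : K := \sum_i \sum_j t i j * (a 0 i * b 0 j).

Lemma tpairing_is_linear a b : scalar (tpairing a b).
Proof.
move=> k t1 t2 /=; rewrite /tpairing mulr_sumr -big_split; apply: eq_bigr => i _.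
by rewrite mulr_sumr -big_split; apply: eq_bigr => j _; rewrite !mxE /=; ring.
Qed.

HB.instance Definition _ a b :=
  GRing.isLinear.Build K 'M[K]_n K *%R (tpairing a b) (tpairing_is_linear a b).

Lemma tpairing_tens a b x y : tpairing a b (tens x y) = pairing x a * pairing y b.
Proof.
rewrite /tpairing /pairing big_distrl; apply: eq_bigr => i _ /=.
rewrite big_distrr; apply: eq_bigr => j _ /=.
by rewrite !mxE big_ord1 !mxE; ring.
Qed.

Lemma tpairing_tmap a b f h t :
  tpairing a b (tmap f h t) = tpairing (dualmap f a) (dualmap h b) t.
Proof.
rewrite /tmap linear_sum [RHS]/tpairing; apply: eq_bigr => i _.
rewrite linear_sum; apply: eq_bigr => j _.
by rewrite linearZ /= tpairing_tens !mxE.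
Qed.

Lemma tpairing_Delta (br : {bilinear V -> V -> V}) a b x :
  tpairing a b (Delta br x) = pairing x (br a b).
Proof.
rewrite [in RHS](row_sum_delta a) linear_sumlz linear_sumr; apply: eq_bigr => i _.
rewrite linearZl_LR linearZr_LR /= [in RHS](row_sum_delta b) linear_sumr linear_sumr mulr_sumr.
apply: eq_bigr => j _; rewrite linearZr_LR linearZr_LR /= mxE /ev; ring.
Qed.

End TensorPairing.

Section Coadjoint.
Variables (K : fieldType) (n : nat).
Local Notation V := 'rV[K]_n.
Implicit Types (x y a b : V).
Variables (br : {bilinear V -> V -> V}) (f : {linear V -> V}).

Lemma coadgE x a : coadg br f x a = - dualmap (br (f x)) a.
Proof. by apply/rowP => j; rewrite !mxE. Qed.

Lemma pairing_coadg x y a : pairing y (coadg br f x a) = - pairing (br (f x) y) a.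
Proof. by rewrite coadgE linearNr /= pairing_dualmap. Qed.

Lemma pairing_coadgl x y a : pairing (coadg br f x a) y = - pairing (br (f x) y) a.
Proof. by rewrite pairingC pairing_coadg. Qed.

Lemma pairing_br x y a : pairing (br (f x) y) a = - pairing y (coadg br f x a).
Proof. by rewrite pairing_coadg opprK. Qed.

Lemma coadg_is_bilinear :
  bilinear_for (GRing.Scale.Law.clone _ _ *:%R _) (GRing.Scale.Law.clone _ _ *:%R _)
    (coadg br f).
Proof.
split=> [a|x] k u v /=; apply: eq_by_pairingl => y;
  rewrite !(linearDr, linearZr_LR) /= !pairing_coadg ?(linearD, linearZ) /=
    !(linearDl, linearDr, linearZl_LR, linearZr_LR) /=; ring.
Qed.

HB.instance Definition _ :=
  bilinear_isBilinear.Build K V V V _ _ (coadg br f) coadg_is_bilinear.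

Section HomLieCoadjoint.
Hypothesis br_skew : forall x y, br x y = - br y x.
Hypothesis f_br : forall x y, f (br x y) = br (f x) (f y).
Hypothesis br_jacobi :
  forall x y z, br (f x) (br y z) + br (f y) (br z x) + br (f z) (br x y) = 0.
Hypothesis br_f2 : forall x y, br (f (f x)) y = br x y.

Lemma br_jacobi_solve x y z :
  br (f z) (br x y) = - br (f x) (br y z) - br (f y) (br z x).
Proof. by move/eqP: (br_jacobi x y z); rewrite addrC addr_eq0 opprD => /eqP. Qed.

Lemma f2_br x y : f (f (br x y)) = br x y.
Proof. by rewrite !f_br br_f2 br_skew br_f2 -br_skew. Qed.

Lemma coadg_f2 x a : coadg br f (f (f x)) a = coadg br f x a.
Proof. by apply/rowP => j; rewrite !mxE br_f2. Qed.

Lemma coadg_dualmap2 x a : coadg br f x (dualmap f (dualmap f a)) = coadg br f x a.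
Proof. by apply: eq_by_pairingl => y; rewrite !pairing_coadg !pairing_dualmap f2_br. Qed.

Lemma dualmap_coadg x a : dualmap f (coadg br f x a) = coadg br f (f x) (dualmap f a).
Proof.
apply: eq_by_pairingl => y.
by rewrite pairing_dualmap !pairing_coadg br_f2 pairing_dualmap f_br.
Qed.

Lemma coadg_br x y a : coadg br f (br x y) (dualmap f a) =
  coadg br f (f x) (coadg br f y a) - coadg br f (f y) (coadg br f x a).
Proof.
apply: eq_by_pairingl => t.
rewrite linearBr /= !pairing_coadg !br_f2 pairing_dualmap f_br f2_br.
rewrite (br_skew (br x y)) (br_jacobi_solve x y t) (br_skew t x).
by rewrite !(linearNl, linearBl, linearNr) /=; ring.
Qed.

End HomLieCoadjoint.
End Coadjoint.

Section Jacobiator.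
Variables (R : nzRingType) (T : lmodType R).
Variables (br : {bilinear T -> T -> T}) (f : {linear T -> T}).
Implicit Types u v w : T.

Definition jacobiator u v w := br (f u) (br v w) + br (f v) (br w u) + br (f w) (br u v).

Lemma jacobiator_cycle u v w : jacobiator u v w = jacobiator v w u.
Proof. by rewrite /jacobiator -addrA addrC. Qed.

Lemma jacobiatorDl u1 u2 v w :
  jacobiator (u1 + u2) v w = jacobiator u1 v w + jacobiator u2 v w.
Proof.
rewrite /jacobiator linearD !linearDl !linearDr.
by rewrite (addrACA (br (f u1) _)) (addrACA (_ + _) (_ + _) (br (f w) _)).
Qed.

Lemma jacobiatorDm u v1 v2 w :
  jacobiator u (v1 + v2) w = jacobiator u v1 w + jacobiator u v2 w.
Proof. by rewrite jacobiator_cycle jacobiatorDl -!(jacobiator_cycle u). Qed.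

Lemma jacobiatorDr u v w1 w2 :
  jacobiator u v (w1 + w2) = jacobiator u v w1 + jacobiator u v w2.
Proof.
by rewrite -jacobiator_cycle jacobiatorDl (jacobiator_cycle w1) (jacobiator_cycle w2).
Qed.

End Jacobiator.

Ltac linear_expand := rewrite ?(linearDl, linearDr, linearNl, linearNr,
  linearZl_LR, linearZr_LR, linear0l, linear0r, linear0) /=
  ?(addr0, add0r, subr0, sub0r, oppr0).

Ltac pairing_ring := apply: eq_by_pairingl => ?; linear_expand; ring.

Section Double.
Variables (K : fieldType) (n : nat).
Local Notation V := 'rV[K]_n.
Implicit Types (x y z a b c : V) (u v w : V * V).
Variables (brg brs : {bilinear V -> V -> V}) (phi : {linear V -> V}).
Local Notation psi := (dualmap phi).
(* [ads] is the paper's frak-ad°, by [coads_coadg]. *)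
Local Notation ad := (coadg brg phi).
Local Notation ads := (coadg brs psi).
Local Notation bd := (brd brg phi brs).
Local Notation pd := (phid phi).

Hypothesis brg_skew : forall x y, brg x y = - brg y x.
Hypothesis phi_brg : forall x y, phi (brg x y) = brg (phi x) (phi y).
Hypothesis brg_jacobi : forall x y z,
  brg (phi x) (brg y z) + brg (phi y) (brg z x) + brg (phi z) (brg x y) = 0.
Hypothesis brg_phi2 : forall x y, brg (phi (phi x)) y = brg x y.
Hypothesis brs_skew : forall a b, brs a b = - brs b a.
Hypothesis psi_brs : forall a b, psi (brs a b) = brs (psi a) (psi b).
Hypothesis brs_jacobi : forall a b c,
  brs (psi a) (brs b c) + brs (psi b) (brs c a) + brs (psi c) (brs a b) = 0.
Hypothesis brs_psi2 : forall a b, brs (psi (psi a)) b = brs a b.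
Hypothesis cocycle : forall x y, Delta brs (brg x y) =
  adT brg phi (phi x) (Delta brs y) - adT brg phi (phi y) (Delta brs x).

Lemma brdE u v : bd u v =
  (brg u.1 v.1 + ads u.2 v.1 - ads v.2 u.1, ad u.1 v.2 - ad v.1 u.2 + brs u.2 v.2).
Proof. by case: u v => [x a] [y b]; rewrite /brd !coads_coadg. Qed.

Lemma pairing_cocycle x y a b : pairing (brg x y) (brs a b) =
  - pairing y (brs (ad x a) (psi b)) - pairing y (brs (psi a) (ad x b))
  + pairing x (brs (ad y a) (psi b)) + pairing x (brs (psi a) (ad y b)).
Proof.
have := congr1 (tpairing a b) (cocycle x y).
rewrite linearB /adT !linearD /= !tpairing_tmap !tpairing_Delta => ->.
by rewrite !coadgE !(linearNl, linearNr) /=; ring.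
Qed.

Lemma ads_brg x y c : ads (psi c) (brg x y) =
  brg (phi x) (ads c y) - brg (phi y) (ads c x) + ads (ad y c) (phi x) - ads (ad x c) (phi y).
Proof.
apply: eq_by_pairingl => b; linear_expand.
rewrite !pairing_coadg /= brs_psi2 !(pairingC _ (phi _)) -!(pairing_dualmap phi).
rewrite !psi_brs !brs_psi2.
rewrite !(pairingC b) !pairing_br !pairing_coadgl /= !(pairingC (brs _ _)) pairing_cocycle.
by linear_expand; ring.
Qed.

Lemma ad_brs x a b : ad (phi x) (brs a b) =
  brs (psi a) (ad x b) - brs (psi b) (ad x a) + ad (ads b x) (psi a) - ad (ads a x) (psi b).
Proof.
apply: eq_by_pairingl => y; linear_expand.
rewrite !pairing_coadg /= brg_phi2 !pairing_dualmap !phi_brg !brg_phi2.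
rewrite (brg_skew (ads a x)) (brg_skew (ads b x)); linear_expand.
rewrite !pairing_br !pairing_coadgl /= !(pairingC (brs _ _)) !(brs_skew (psi b)).
rewrite pairing_cocycle.
by linear_expand; ring.
Qed.

Lemma brd_linearl k u v w : bd (k *: u + v) w = k *: bd u w + bd v w.
Proof. by rewrite !brdE; apply: (congr2 pair) => /=; pairing_ring. Qed.

Lemma brd_linearr k u v w : bd w (k *: u + v) = k *: bd w u + bd w v.
Proof. by rewrite !brdE; apply: (congr2 pair) => /=; pairing_ring. Qed.

HB.instance Definition _ :=
  bilinear_isBilinear.Build K (V * V)%type (V * V)%type (V * V)%type _ _ bd
  (fun w k u v => brd_linearl k u v w, fun w k u v => brd_linearr k u v w).

Lemma brd_skew u v : bd u v = - bd v u.
Proof.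
rewrite !brdE (brg_skew v.1) (brs_skew v.2).
by apply: (congr2 pair) => /=; pairing_ring.
Qed.

Lemma phid_linear : linear pd.
Proof. by move=> k [x a] [y b]; rewrite /phid /= !linearP. Qed.

HB.instance Definition _ := GRing.isLinear.Build K (V * V)%type (V * V)%type _ pd phid_linear.

Lemma phi_ads a x : phi (ads a x) = ads (psi a) (phi x).
Proof. by rewrite -dualmapK (dualmap_coadg psi_brs brs_psi2) dualmapK. Qed.

Lemma phid_brd u v : pd (bd u v) = bd (pd u) (pd v).
Proof.
rewrite !brdE /phid /= !(linearD, linearN) /=.
by rewrite phi_brg psi_brs !phi_ads !(dualmap_coadg phi_brg brg_phi2).
Qed.

Lemma ads_phi2 b x : ads b (phi (phi x)) = ads b x.
Proof.
apply: eq_by_pairingl => t.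
rewrite !pairing_coadg /= (pairingC _ (phi _)) -!(pairing_dualmap phi).
by rewrite (f2_br brs_skew psi_brs brs_psi2) pairingC.
Qed.

Lemma brd_phid2 u v : bd (pd (pd u)) v = bd u v.
Proof.
rewrite !brdE /phid /= brg_phi2 (coadg_f2 brs_psi2) ads_phi2.
by rewrite (coadg_f2 brg_phi2) (coadg_dualmap2 brg_skew phi_brg brg_phi2) brs_psi2.
Qed.

Lemma ad_brg x y c : ad (brg x y) (psi c) = ad (phi x) (ad y c) - ad (phi y) (ad x c).
Proof. exact: coadg_br. Qed.

Lemma ads_brs a b x : ads (brs a b) (phi x) = ads (psi a) (ads b x) - ads (psi b) (ads a x).
Proof. by rewrite -(dualmapK phi x) coadg_br. Qed.

Local Notation J := (jacobiator bd pd).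

Lemma jacobiatorE u v w :
  J u v w = bd (pd u) (bd v w) + bd (pd v) (bd w u) + bd (pd w) (bd u v).
Proof. by []. Qed.

Ltac jacobi_components :=
  rewrite jacobiatorE !brdE /phid /= linear0 !(linear0l, linear0r)
    ?(addr0, add0r, subr0, sub0r, oppr0); apply: (congr2 pair) => /=.

Lemma jacobiator_ggg x y z : J (x, 0) (y, 0) (z, 0) = 0.
Proof. by jacobi_components; linear_expand; [apply: brg_jacobi|]. Qed.

Lemma jacobiator_ddd a b c : J (0, a) (0, b) (0, c) = 0.
Proof. by jacobi_components; linear_expand; [|apply: brs_jacobi]. Qed.

Lemma jacobiator_ggd x y c : J (x, 0) (y, 0) (0, c) = 0.
Proof.
jacobi_components; first by rewrite ads_brg; pairing_ring.
by rewrite ad_brg; pairing_ring.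
Qed.

Lemma jacobiator_ddg a b x : J (0, a) (0, b) (x, 0) = 0.
Proof.
jacobi_components; first by rewrite ads_brs; pairing_ring.
by rewrite ad_brs; pairing_ring.
Qed.

Lemma brd_jacobi u v w : J u v w = 0.
Proof.
have pairE x a : ((x, a) : V * V) = (x, 0) + (0, a).
  by rewrite -[RHS]/(x + 0, 0 + a) addr0 add0r.
case: u v w => [x a] [y b] [z c]; rewrite (pairE x a) (pairE y b) (pairE z c).
rewrite !jacobiatorDl !jacobiatorDm !jacobiatorDr.
rewrite ![J (0, _) (_, 0) (0, _)]jacobiator_cycle ![J (_, 0) (0, _) (0, _)]jacobiator_cycle.
rewrite ![J (_, 0) (0, _) (_, 0)]jacobiator_cycle ![J (0, _) (_, 0) (_, 0)]jacobiator_cycle.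
by rewrite jacobiator_ggg jacobiator_ddd !jacobiator_ggd !jacobiator_ddg !addr0.
Qed.

Lemma double_HomLie :
  HomLie (V := (V * V)%type) bd pd /\ weakly_involutive (V := (V * V)%type) bd pd.
Proof.
split; last exact: brd_phid2.
split; [exact: brd_linearl | exact: brd_linearr | exact: brd_skew | exact: phid_linear |].
by split; [exact: phid_brd | exact: brd_jacobi].
Qed.

End Double.

Theorem corollary3p10 (K : fieldType) (n : nat)
    (brg : 'rV[K]_n -> 'rV[K]_n -> 'rV[K]_n) (phi : 'rV[K]_n -> 'rV[K]_n)
    (brs : 'rV[K]_n -> 'rV[K]_n -> 'rV[K]_n) :
  HomLieBialgebra brg phi brs ->
  HomLie (V := ('rV[K]_n * 'rV[K]_n)%type) (brd brg phi brs) (phid phi) /\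
  weakly_involutive (V := ('rV[K]_n * 'rV[K]_n)%type) (brd brg phi brs) (phid phi).
Proof.
case=> [[brgl brgr brg_skew phil [phi_brg brg_jacobi]] brg_phi2
        [brsl brsr brs_skew _ [psi_brs brs_jacobi]] brs_psi2 cocycle].
pose brgB : {bilinear 'rV[K]_n -> 'rV[K]_n -> 'rV[K]_n} := HB.pack brg
  (bilinear_isBilinear.Build _ _ _ _ _ _ brg
    (fun z c x y => brgl c x y z, fun z c x y => brgr c x y z)).
pose brsB : {bilinear 'rV[K]_n -> 'rV[K]_n -> 'rV[K]_n} := HB.pack brs
  (bilinear_isBilinear.Build _ _ _ _ _ _ brs
    (fun z c x y => brsl c x y z, fun z c x y => brsr c x y z)).
pose phiL : {linear 'rV[K]_n -> 'rV[K]_n} :=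
  HB.pack phi (GRing.isLinear.Build _ _ _ _ phi phil).
exact: (@double_HomLie K n brgB brsB phiL brg_skew phi_brg brg_jacobi brg_phi2
  brs_skew psi_brs brs_jacobi brs_psi2 cocycle).
Qed.
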